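(* Let $\{x_i,v_i\}_{i\in[N]}$ be the global solution of the delayed Cucker–Smale system described in the context, let $\beta>0$ and \[ G(t):=d_v(t)+\beta\int_{\max\{0,t-2\tau\}}^t e^{-(t-s)}\int_s^t\max_{i\in[N]}|\dot v_i(r)|\,\mathrm dr\,\mathrm ds,\qquad t\ge0. \] Then for all $i,j\in[N]$ and $t\ge2\tau$, \[ |v_j(t-\tau)-v_i(t-\sigma)|\le d_v(t-\tau)+\int_{t-\tau}^{t-\sigma}d_v(s-\tau)\,\mathrm ds+\beta^{-1}e^{2\tau}G(t-\sigma). \]
   Context: Let $N\ge2$, $d\ge1$ be integers, $[N]=\{1,\dots,N\}$, $0\le\sigma\le\tau$. Let $\psi:[0,\infty)\to[0,\infty)$ be continuous, nonincreasing, positive everywhere, with $\sup\psi\le1$. Given $x_i^0\in C^1([-\tau,0],\mathbb{R}^d)$, $v_i^0\in C([-\tau,0],\mathbb{R}^d)$ with $\frac{\mathrm d}{\mathrm dt}x_i^0=v_i^0$, $\{x_i,v_i\}$ is the global solution of $\dot x_i(t)=v_i(t)$, $\dot v_i(t)=\sum_{j\ne i}a_{ij}(t)(v_j(t-\tau)-v_i(t-\sigma))$ for $t>0$, with $a_{ij}(t)=\frac1{N-1}\psi(|x_i(t-\sigma)-x_j(t-\tau)|)$, and $x_i=x_i^0$, $v_i=v_i^0$ on $[-\tau,0]$ ($v_i$ continuously differentiable on $[0,\infty)$). $d_v(t):=\max_{i,j}|v_i(t)-v_j(t)|$. *)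

From Stdlib Require Import Reals Lra.
From Coquelicot Require Import Coquelicot.
Open Scope R_scope.

(* Vectors of R^d are represented as functions nat -> R, only coordinates 0..d-1 matter.
   Particles are indexed by 0..N-1. *)

Fixpoint sumn_R (n : nat) (f : nat -> R) : R :=
  match n with
  | O => 0
  | S m => sumn_R m f + f m
  end.

(* max_{k<n} f k  (with value 0 for n = 0; only used with nonnegative f and n >= 2) *)
Fixpoint maxn_R (n : nat) (f : nat -> R) : R :=
  match n with
  | O => 0
  | S O => f O
  | S m => Rmax (maxn_R m f) (f m)
  end.

Definition vnorm (d : nat) (u : nat -> R) : R :=
  sqrt (sumn_R d (fun k => u k ^ 2)).

Definition vsub (u w : nat -> R) : nat -> R := fun k => u k - w k.

Definition dv (N d : nat) (v : nat -> R -> nat -> R) (t : R) : R :=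
  maxn_R N (fun i => maxn_R N (fun j => vnorm d (vsub (v i t) (v j t)))).

Definition vderiv (f : R -> nat -> R) (r : R) : nat -> R :=
  fun k => Derive (fun s => f s k) r.

Definition maxvdot (N d : nat) (v : nat -> R -> nat -> R) (r : R) : R :=
  maxn_R N (fun i => vnorm d (vderiv (v i) r)).

Definition Gfun (N d : nat) (tau beta : R) (v : nat -> R -> nat -> R) (t : R) : R :=
  dv N d v t
  + beta * RInt (fun s => exp (- (t - s)) * RInt (fun r => maxvdot N d v r) s t)
                (Rmax 0 (t - 2 * tau)) t.

Definition aw (N d : nat) (sigma tau : R) (psi : R -> R) (x : nat -> R -> nat -> R)
  (i j : nat) (t : R) : R :=
  / INR (N - 1) * psi (vnorm d (vsub (x i (t - sigma)) (x j (t - tau)))).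

Definition rhs (N d : nat) (sigma tau : R) (psi : R -> R) (x v : nat -> R -> nat -> R)
  (i : nat) (t : R) (k : nat) : R :=
  sumn_R N (fun j => if Nat.eqb j i then 0
                     else aw N d sigma tau psi x i j t * (v j (t - tau) k - v i (t - sigma) k)).

From Stdlib Require Import Reals Lra Lia IndefiniteDescription.
From Coquelicot Require Import Coquelicot.
Open Scope R_scope.

(* Let A(y) = int_0^y max_i |v_i'|.  For r >= tau the velocity equation, whose weights
   a_ij sum to at most 1, together with the triangle inequality through v_i(r - tau), gives
   max_i |v_i'(r)| <= d_v(r - tau) + A(r - sigma) - A(r - tau).  The same triangle
   inequality at r = t bounds the left-hand side by d_v(t - tau) + A(t - sigma) - A(t - tau);
   integrating the first bound over [t - tau, t - sigma] produces the d_v integral plus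
   int (A(r - sigma) - A(r - tau)) dr.  After the shift r = y + tau the integrand is at most
   A(t - sigma) - A(y) <= e^(2 tau) e^(-(t - sigma - y)) (A(t - sigma) - A(y)), since
   t - sigma - y <= 2 tau, and this integrates to at most e^(2 tau) / beta times the memory
   term of G(t - sigma). *)

Lemma sumn_R_ext n f g :
  (forall k, (k < n)%nat -> f k = g k) -> sumn_R n f = sumn_R n g.
Proof.
  induction n as [|n IH]; intros Hfg; simpl; [reflexivity|].
  rewrite IH by (intros; apply Hfg; lia). rewrite (Hfg n) by lia; reflexivity.
Qed.

Lemma sumn_R_plus n f g : sumn_R n (fun k => f k + g k) = sumn_R n f + sumn_R n g.
Proof. induction n as [|n IH]; simpl; [|rewrite IH]; lra. Qed.

Lemma sumn_R_scal n c f : sumn_R n (fun k => c * f k) = c * sumn_R n f.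
Proof. induction n as [|n IH]; simpl; [|rewrite IH]; lra. Qed.

Lemma sumn_R_le n f g :
  (forall k, (k < n)%nat -> f k <= g k) -> sumn_R n f <= sumn_R n g.
Proof.
  induction n as [|n IH]; intros Hfg; simpl; [lra|].
  apply Rplus_le_compat; [apply IH; intros; apply Hfg|apply Hfg]; lia.
Qed.

Lemma sumn_R_ge0 n f : (forall k, (k < n)%nat -> 0 <= f k) -> 0 <= sumn_R n f.
Proof.
  induction n as [|n IH]; intros Hf; simpl; [lra|].
  apply Rplus_le_le_0_compat; [apply IH; intros; apply Hf|apply Hf]; lia.
Qed.

Lemma sumn_R_const n c : sumn_R n (fun _ => c) = INR n * c.
Proof. induction n as [|n IH]; simpl sumn_R; [simpl; lra|]. rewrite IH, S_INR; lra. Qed.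

Lemma sumn_R_skip_const n i c : (i < n)%nat ->
  sumn_R n (fun j => if Nat.eqb j i then 0 else c) = INR (n - 1) * c.
Proof.
  induction n as [|n IH]; intros Hi; [lia|]. simpl sumn_R.
  replace (S n - 1)%nat with n by lia.
  destruct (Nat.eqb_spec n i) as [->|Hni].
  - rewrite (sumn_R_ext _ _ (fun _ => c)), sumn_R_const; [lra|].
    intros k Hk. destruct (Nat.eqb_spec k i); [lia|reflexivity].
  - rewrite IH, minus_INR by lia. simpl INR. lra.
Qed.

Lemma maxn_R_ext n f g :
  (forall k, (k < n)%nat -> f k = g k) -> maxn_R n f = maxn_R n g.
Proof.
  induction n as [|[|n] IH]; intros Hfg; [reflexivity|apply Hfg; lia|].
  change (Rmax (maxn_R (S n) f) (f (S n)) = Rmax (maxn_R (S n) g) (g (S n))).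
  rewrite IH by (intros; apply Hfg; lia). rewrite (Hfg (S n)) by lia; reflexivity.
Qed.

Lemma maxn_R_ge n f i : (i < n)%nat -> f i <= maxn_R n f.
Proof.
  induction n as [|[|n] IH]; intros Hi; [lia|simpl; replace i with 0%nat by lia; lra|].
  change (f i <= Rmax (maxn_R (S n) f) (f (S n))).
  destruct (Nat.eq_dec i (S n)) as [->|Hin]; [apply Rmax_r|].
  eapply Rle_trans; [apply IH; lia|apply Rmax_l].
Qed.

Lemma maxn_R_le n f c :
  (0 < n)%nat -> (forall k, (k < n)%nat -> f k <= c) -> maxn_R n f <= c.
Proof.
  induction n as [|[|n] IH]; intros Hn Hf; [lia|apply Hf; lia|].
  apply Rmax_lub; [apply IH; [lia|intros; apply Hf; lia]|apply Hf; lia].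
Qed.

Lemma sumn_R_sqr_ge0 d u : 0 <= sumn_R d (fun k => u k ^ 2).
Proof. apply sumn_R_ge0; intros; apply pow2_ge_0. Qed.

Lemma sumn_R_mul_sqr_le d u w :
  (sumn_R d (fun k => u k * w k)) ^ 2
  <= sumn_R d (fun k => u k ^ 2) * sumn_R d (fun k => w k ^ 2).
Proof.
  induction d as [|d IH]; cbn [sumn_R]; [lra|].
  set (A := sumn_R d (fun k => u k * w k)) in *.
  set (Su := sumn_R d (fun k => u k ^ 2)) in *.
  set (Sw := sumn_R d (fun k => w k ^ 2)) in *.
  assert (HSu : 0 <= Su) by apply sumn_R_sqr_ge0.
  assert (HSw : 0 <= Sw) by apply sumn_R_sqr_ge0.
  set (a := u d); set (b := w d).
  assert (Hcross : 2 * A * a * b <= Su * b ^ 2 + Sw * a ^ 2).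
  { (* (Su b^2 + Sw a^2)^2 - (2Aab)^2 = (Su b^2 - Sw a^2)^2 + 4 a^2 b^2 (Su Sw - A^2) *)
    assert (HX : 0 <= Su * b ^ 2 + Sw * a ^ 2) by nra.
    assert ((2 * A * a * b) ^ 2 <= (Su * b ^ 2 + Sw * a ^ 2) ^ 2).
    { assert (0 <= (Su * b ^ 2 - Sw * a ^ 2) ^ 2) by apply pow2_ge_0.
      assert (0 <= a ^ 2 * b ^ 2 * (Su * Sw - A ^ 2)) by (apply Rmult_le_pos; nra).
      nra. }
    destruct (Rle_or_lt (2 * A * a * b) (Su * b ^ 2 + Sw * a ^ 2)); [assumption|nra]. }
  nra.
Qed.

Lemma vnorm_ge0 d u : 0 <= vnorm d u.
Proof. apply sqrt_pos. Qed.

Lemma vnorm_ext d u w : (forall k, (k < d)%nat -> u k = w k) -> vnorm d u = vnorm d w.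
Proof. intros Huw. unfold vnorm. f_equal. apply sumn_R_ext. intros k Hk. rewrite Huw; auto. Qed.

Lemma vnorm_zero d : vnorm d (fun _ => 0) = 0.
Proof.
  unfold vnorm. rewrite (sumn_R_ext _ _ (fun _ => 0)), sumn_R_const, Rmult_0_r;
    [apply sqrt_0|intros; ring].
Qed.

Lemma vnorm_scal d c u : vnorm d (fun k => c * u k) = Rabs c * vnorm d u.
Proof.
  unfold vnorm. rewrite (sumn_R_ext _ _ (fun k => c² * u k ^ 2)) by (intros; unfold Rsqr; ring).
  rewrite sumn_R_scal, sqrt_mult_alt, sqrt_Rsqr_abs by apply Rle_0_sqr. reflexivity.
Qed.

Lemma sumn_R_mul_le_vnorm d u w : sumn_R d (fun k => u k * w k) <= vnorm d u * vnorm d w.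
Proof.
  unfold vnorm. rewrite <- sqrt_mult by apply sumn_R_sqr_ge0.
  eapply Rle_trans; [apply Rle_abs|]. rewrite <- sqrt_Rsqr_abs.
  apply sqrt_le_1_alt. rewrite Rsqr_pow2. apply sumn_R_mul_sqr_le.
Qed.

Lemma vnorm_triangle d u w : vnorm d (fun k => u k + w k) <= vnorm d u + vnorm d w.
Proof.
  assert (Hsq : forall u, sumn_R d (fun k => u k ^ 2) = vnorm d u ^ 2).
  { intros u'. unfold vnorm. rewrite pow2_sqrt by apply sumn_R_sqr_ge0. reflexivity. }
  unfold vnorm at 1. rewrite <- (sqrt_pow2 (vnorm d u + vnorm d w))
    by (apply Rplus_le_le_0_compat; apply vnorm_ge0).
  apply sqrt_le_1_alt.
  rewrite (sumn_R_ext _ _ (fun k => u k ^ 2 + 2 * (u k * w k) + w k ^ 2)) by (intros; ring).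
  rewrite !sumn_R_plus, sumn_R_scal, !Hsq.
  pose proof (sumn_R_mul_le_vnorm d u w). nra.
Qed.

Lemma vnorm_sumn_R d n g :
  vnorm d (fun k => sumn_R n (fun j => g j k)) <= sumn_R n (fun j => vnorm d (g j)).
Proof.
  induction n as [|n IH]; cbn [sumn_R]; [rewrite vnorm_zero; lra|].
  eapply Rle_trans; [apply (vnorm_triangle d (fun k => sumn_R n (fun j => g j k)) (g n))|lra].
Qed.

Lemma vnorm_vsub_triangle d p q r :
  vnorm d (vsub p r) <= vnorm d (vsub p q) + vnorm d (vsub q r).
Proof.
  rewrite (vnorm_ext d (vsub p r) (fun k => vsub p q k + vsub q r k))
    by (intros; unfold vsub; ring).
  apply vnorm_triangle.
Qed.

Lemma vnorm_vsub_sym d p q : vnorm d (vsub p q) = vnorm d (vsub q p).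
Proof.
  rewrite (vnorm_ext d (vsub p q) (fun k => -1 * vsub q p k)) by (intros; unfold vsub; ring).
  rewrite vnorm_scal, Rabs_left by lra. ring.
Qed.

Lemma continuous_Rmax (f g : R -> R) (x : R) :
  continuous f x -> continuous g x -> continuous (fun y => Rmax (f y) (g y)) x.
Proof.
  intros Hf Hg.
  apply continuous_ext with (fun y => (f y + g y + Rabs (f y - g y)) * / 2).
  { intros y. unfold Rmax. destruct (Rle_dec (f y) (g y)).
    - rewrite Rabs_left1; lra.
    - rewrite Rabs_right; lra. }
  apply (continuous_mult (fun y => f y + g y + Rabs (f y - g y)) (fun _ => / 2));
    [|apply continuous_const].
  apply (continuous_plus (fun y => f y + g y) (fun y => Rabs (f y - g y))).
  - apply (continuous_plus f g); assumption.
  - apply (continuous_Rabs_comp (fun y => f y - g y)), (continuous_minus f g); assumption.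
Qed.

Lemma continuous_sumn_R n (f : nat -> R -> R) (x : R) :
  (forall k, (k < n)%nat -> continuous (f k) x) ->
  continuous (fun y => sumn_R n (fun k => f k y)) x.
Proof.
  induction n as [|n IH]; intros Hf; cbn [sumn_R]; [apply continuous_const|].
  apply (continuous_plus (fun y => sumn_R n (fun k => f k y)) (f n));
    [apply IH; intros; apply Hf|apply Hf]; lia.
Qed.

Lemma continuous_maxn_R n (f : nat -> R -> R) (x : R) :
  (forall k, (k < n)%nat -> continuous (f k) x) ->
  continuous (fun y => maxn_R n (fun k => f k y)) x.
Proof.
  induction n as [|[|n] IH]; intros Hf; [apply continuous_const|apply Hf; lia|].
  apply continuous_Rmax; [apply IH; intros; apply Hf|apply Hf]; lia.
Qed.

Lemma continuous_vnorm d (u : R -> nat -> R) (x : R) :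
  (forall k, (k < d)%nat -> continuous (fun y => u y k) x) ->
  continuous (fun y => vnorm d (u y)) x.
Proof.
  intros Hu. apply (continuous_sqrt_comp (fun y => sumn_R d (fun k => u y k ^ 2))).
  apply (continuous_sumn_R d (fun k y => u y k ^ 2)). intros k Hk.
  apply continuous_ext with (fun y => u y k * u y k); [intros y; exact (Rsqr_pow2 (u y k))|].
  apply (continuous_mult (fun y => u y k) (fun y => u y k)); apply Hu; assumption.
Qed.

Lemma continuous_comp_sub (f : R -> R) c (r : R) :
  continuous f (r - c) -> continuous (fun s => f (s - c)) r.
Proof.
  apply (continuous_comp (fun s => s - c) f).
  apply (ex_derive_continuous (fun s => s - c)). auto_derive. trivial.
Qed.

Lemma is_derive_sumn_R n (f : nat -> R -> R) (df : nat -> R) (x : R) :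
  (forall k, (k < n)%nat -> is_derive (f k) x (df k)) ->
  is_derive (fun y => sumn_R n (fun k => f k y)) x (sumn_R n df).
Proof.
  induction n as [|n IH]; intros Hf; cbn [sumn_R]; [apply (is_derive_const 0)|].
  apply (is_derive_plus (fun y => sumn_R n (fun k => f k y)) (f n));
    [apply IH; intros; apply Hf|apply Hf]; lia.
Qed.

Lemma locally_ge (a t : R) : a < t -> locally t (fun s => a <= s).
Proof.
  intros Hat. apply filter_imp with (fun s => a < s); [intros; lra|]. now apply open_gt.
Qed.

Lemma locally_le_within (t : R) (D : R -> Prop) :
  locally t D -> filter_le (locally t) (within D (locally t)).
Proof.
  intros HD P HP. apply filter_imp with (fun s => D s /\ (D s -> P s)); [tauto|].
  now apply filter_and.
Qed.

Lemma is_derive_of_filterdiff_within (f : R -> R) (D : R -> Prop) t l :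
  locally t D -> filterdiff f (within D (locally t)) (fun h => scal h l) -> is_derive f t l.
Proof.
  intros HD [Hlin Hdom]. split; [exact Hlin|]. intros y Hy.
  apply (@is_filter_lim_locally_unique R_AbsRing R_NormedModule) in Hy. subst y.
  intros eps. apply (locally_le_within t D HD), Hdom.
  intros P HP. now apply filter_le_within.
Qed.

Lemma vnorm_increment_le d (f df : R -> nat -> R) (F m : R -> R) p q :
  p <= q ->
  (forall r k, p < r < q -> (k < d)%nat -> is_derive (fun s => f s k) r (df r k)) ->
  (forall r k, p <= r <= q -> (k < d)%nat -> continuous (fun s => f s k) r) ->
  (forall r, p < r < q -> is_derive F r (m r)) ->
  (forall r, p <= r <= q -> continuous F r) ->
  (forall r, p <= r <= q -> vnorm d (df r) <= m r) ->
  vnorm d (vsub (f q) (f p)) <= F q - F p.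
Proof.
  intros Hpq Hf_der Hf_cont HF_der HF_cont Hm.
  assert (HF_incr : F p <= F q).
  { destruct (MVT_gen F p q m) as (c & Hc & Heq);
      rewrite Rmin_left, Rmax_right in * by lra.
    - exact HF_der.
    - intros r Hr. now apply continuity_pt_filterlim, HF_cont.
    - pose proof (Hm c Hc). pose proof (vnorm_ge0 d (df c)). nra. }
  set (D := vsub (f q) (f p)). set (n := vnorm d D).
  assert (Hn : 0 <= n) by apply vnorm_ge0.
  (* The component of [f] along [D], minus [n F], is nonincreasing by Cauchy-Schwarz. *)
  set (phi := fun r => sumn_R d (fun k => D k * f r k) - n * F r).
  destruct (MVT_gen phi p q (fun r => sumn_R d (fun k => D k * df r k) - n * m r))
    as (c & Hc & Heq); rewrite Rmin_left, Rmax_right in * by lra.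
  - intros r Hr. apply (is_derive_minus _ (fun r => n * F r)).
    + apply (is_derive_sumn_R d (fun k r => D k * f r k)). intros k Hk.
      apply is_derive_scal, Hf_der; assumption.
    + apply is_derive_scal, HF_der, Hr.
  - intros r Hr. apply continuity_pt_filterlim.
    apply (continuous_minus (fun r => sumn_R d (fun k => D k * f r k)) (fun r => n * F r)).
    + apply (continuous_sumn_R d (fun k r => D k * f r k)). intros k Hk.
      apply (continuous_mult (fun _ => D k) (fun r => f r k));
        [apply continuous_const|apply Hf_cont; assumption].
    + apply (continuous_mult (fun _ => n) F); [apply continuous_const|apply HF_cont, Hr].
  - assert (Hslope : sumn_R d (fun k => D k * df c k) - n * m c <= 0).
    { pose proof (sumn_R_mul_le_vnorm d D (df c)) as HCS. fold n in HCS.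
      pose proof (Hm c Hc). nra. }
    assert (Hphi : phi q - phi p = n ^ 2 - n * (F q - F p)).
    { unfold phi, n, vnorm. rewrite pow2_sqrt by apply sumn_R_sqr_ge0.
      enough (sumn_R d (fun k => D k * f q k)
              = sumn_R d (fun k => D k * f p k) + sumn_R d (fun k => D k ^ 2)) by lra.
      rewrite <- sumn_R_plus. apply sumn_R_ext. intros k _. unfold D, vsub. ring. }
    nra.
Qed.

Lemma RInt_le_of_subinterval (f : R -> R) a b c e :
  a <= c <= e -> e <= b -> ex_RInt f a b -> (forall x, a < x < b -> 0 <= f x) ->
  RInt f c e <= RInt f a b.
Proof.
  intros Hce Heb Hf Hf0.
  assert (Hfc : ex_RInt f a c) by (apply (ex_RInt_Chasles_1 f a c b); [lra|exact Hf]).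
  assert (Hfcb : ex_RInt f c b) by (apply (ex_RInt_Chasles_2 f a c b); [lra|exact Hf]).
  assert (Hfce : ex_RInt f c e) by (apply (ex_RInt_Chasles_1 f c e b); [lra|exact Hfcb]).
  assert (Hfeb : ex_RInt f e b) by (apply (ex_RInt_Chasles_2 f c e b); [lra|exact Hfcb]).
  rewrite <- (RInt_Chasles f a c b), <- (RInt_Chasles f c e b) by assumption.
  assert (0 <= RInt f a c) by (apply RInt_ge_0; [lra|exact Hfc|intros; apply Hf0; lra]).
  assert (0 <= RInt f e b) by (apply RInt_ge_0; [lra|exact Hfeb|intros; apply Hf0; lra]).
  unfold plus; simpl. lra.
Qed.

Lemma delay_memory_le (P : R -> R) sigma tau t :
  0 <= sigma <= tau -> 2 * tau <= t ->
  (forall y, continuous P y) -> (forall y z, y <= z -> P y <= P z) ->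
  RInt (fun r => P (r - sigma) - P (r - tau)) (t - tau) (t - sigma)
  <= exp (2 * tau) * RInt (fun s => exp (- (t - sigma - s)) * (P (t - sigma) - P s))
                          (Rmax 0 (t - sigma - 2 * tau)) (t - sigma).
Proof.
  intros Hst Ht HP_cont HP_mono.
  set (b := t - sigma).
  set (K := fun s => exp (- (b - s)) * (P b - P s)).
  set (H := fun r => P (r - sigma) - P (r - tau)).
  assert (HK_cont : forall s, continuous K s).
  { intros s. apply (continuous_mult (fun s => exp (- (b - s))) (fun s => P b - P s)).
    - apply (ex_derive_continuous (fun s => exp (- (b - s)))). auto_derive. trivial.
    - apply (continuous_minus (fun _ => P b) P); [apply continuous_const|apply HP_cont]. }
  assert (HH_cont : forall r, continuous H r).
  { intros r. apply (continuous_minus (fun r => P (r - sigma)) (fun r => P (r - tau)));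
      apply continuous_comp_sub, HP_cont. }
  assert (Hex : forall (f : R -> R) a c, (forall x, continuous f x) -> ex_RInt f a c)
    by (intros f a c Hf; apply (@ex_RInt_continuous R_CompleteNormedModule); intros; apply Hf).
  assert (Hshift : RInt H (t - tau) b = RInt (fun y => H (y + tau)) (t - 2 * tau) (b - tau)).
  { pose proof (RInt_comp_lin H 1 tau (t - 2 * tau) (b - tau)) as E.
    replace (1 * (t - 2 * tau) + tau) with (t - tau) in E by ring.
    replace (1 * (b - tau) + tau) with b in E by ring.
    rewrite <- E by (apply Hex, HH_cont).
    apply RInt_ext. intros y _. rewrite !Rmult_1_l. reflexivity. }
  assert (Hpointwise : forall y, t - 2 * tau < y < b - tau -> H (y + tau) <= exp (2 * tau) * K y).
  { intros y Hy. unfold H, K.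
    replace (y + tau - tau) with y by ring.
    assert (Hweight : 1 <= exp (2 * tau) * exp (- (b - y))).
    { rewrite <- exp_plus. pose proof (exp_ineq1_le (2 * tau + - (b - y))). unfold b in *. lra. }
    pose proof (HP_mono (y + tau - sigma) b ltac:(unfold b in *; lra)).
    pose proof (HP_mono y b ltac:(lra)). nra. }
  rewrite Hshift. eapply Rle_trans.
  { apply RInt_le; [unfold b; lra|apply Hex..|exact Hpointwise].
    - intros y. apply (continuous_comp (fun y => y + tau) H); [|apply HH_cont].
      apply (ex_derive_continuous (fun y => y + tau)). auto_derive. trivial.
    - intros y. apply (continuous_mult (fun _ => exp (2 * tau)) K);
        [apply continuous_const|apply HK_cont]. }
  rewrite (RInt_scal K) by (apply Hex, HK_cont).
  apply Rmult_le_compat_l; [apply Rlt_le, exp_pos|].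
  apply RInt_le_of_subinterval; [|unfold b; lra|apply Hex, HK_cont|].
  - split; [apply Rmax_lub|]; unfold b; lra.
  - intros s Hs. unfold K. apply Rmult_le_pos; [apply Rlt_le, exp_pos|].
    pose proof (HP_mono s b ltac:(lra)). lra.
Qed.

Lemma vnorm_rhs_le N d sigma tau psi x v i t B :
  (2 <= N)%nat -> (i < N)%nat -> (forall r, 0 <= r -> 0 <= psi r <= 1) ->
  (forall j, (j < N)%nat -> vnorm d (vsub (v j (t - tau)) (v i (t - sigma))) <= B) ->
  vnorm d (rhs N d sigma tau psi x v i t) <= B.
Proof.
  intros HN Hi Hpsi HB.
  assert (HN1 : 0 < INR (N - 1)) by (apply lt_0_INR; lia).
  unfold rhs. eapply Rle_trans.
  { apply (vnorm_sumn_R d N (fun j k => if Nat.eqb j i then 0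
      else aw N d sigma tau psi x i j t * (v j (t - tau) k - v i (t - sigma) k))). }
  eapply Rle_trans;
    [apply (sumn_R_le N _ (fun j => if Nat.eqb j i then 0 else / INR (N - 1) * B))|].
  - intros j Hj. destruct (Nat.eqb j i); [rewrite vnorm_zero; lra|].
    rewrite vnorm_scal. unfold aw.
    set (a := psi (vnorm d (vsub (x i (t - sigma)) (x j (t - tau))))).
    assert (Ha : 0 <= a <= 1) by apply Hpsi, vnorm_ge0.
    assert (Hinv : 0 < / INR (N - 1)) by (apply Rinv_0_lt_compat, HN1).
    rewrite Rabs_right by (apply Rle_ge, Rmult_le_pos; lra).
    pose proof (HB j Hj) as Hgap.
    pose proof (vnorm_ge0 d (vsub (v j (t - tau)) (v i (t - sigma)))).
    unfold vsub in *. rewrite Rmult_assoc. apply Rmult_le_compat_l; nra.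
  - rewrite sumn_R_skip_const by assumption. right. field. lra.
Qed.

Lemma C1_nonneg_extension (f w : R -> R) :
  (forall t, 0 <= t ->
     filterdiff f (within (fun s => 0 <= s) (locally t)) (fun h => scal h (w t))
     /\ filterlim w (within (fun s => 0 <= s) (locally t)) (locally (w t))) ->
  (forall r, continuous (fun r => w (Rmax 0 r)) r)
  /\ (forall r, 0 < r -> is_derive f r (w (Rmax 0 r))).
Proof.
  intros Hw. split.
  - intros r.
    apply (filterlim_comp _ _ _ (fun r => Rmax 0 r) w _
             (within (fun s => 0 <= s) (locally (Rmax 0 r)))).
    + intros P HP. apply (continuous_Rmax (fun _ => 0) (fun r => r) r) in HP;
        [|apply continuous_const|apply continuous_id].
      unfold filtermap in *. revert HP. apply filter_imp. intros y Hy. apply Hy, Rmax_l.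
    + apply Hw, Rmax_l.
  - intros r Hr. rewrite Rmax_right by lra.
    apply (is_derive_of_filterdiff_within f (fun s => 0 <= s)); [apply locally_ge, Hr|].
    apply Hw. lra.
Qed.

Lemma C1_family_extension N d (v : nat -> R -> nat -> R) :
  (forall i k, (i < N)%nat -> (k < d)%nat ->
     exists w : R -> R, forall t, 0 <= t ->
       filterdiff (fun s => v i s k) (within (fun s => 0 <= s) (locally t)) (fun h => scal h (w t))
       /\ filterlim w (within (fun s => 0 <= s) (locally t)) (locally (w t))) ->
  exists w : nat -> nat -> R -> R, forall i k, (i < N)%nat -> (k < d)%nat ->
    (forall r, continuous (w i k) r)
    /\ (forall r, 0 < r -> is_derive (fun s => v i s k) r (w i k r)).
Proof.
  intros Hv.
  destruct (functional_choice (fun (ik : nat * nat) (w : R -> R) =>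
    (fst ik < N)%nat -> (snd ik < d)%nat -> forall t, 0 <= t ->
       filterdiff (fun s => v (fst ik) s (snd ik)) (within (fun s => 0 <= s) (locally t))
         (fun h => scal h (w t))
       /\ filterlim w (within (fun s => 0 <= s) (locally t)) (locally (w t)))) as [w Hw].
  { intros [i k]. simpl.
    destruct (Nat.lt_ge_cases i N) as [Hi|Hi]; [destruct (Nat.lt_ge_cases k d) as [Hk|Hk]|];
      [destruct (Hv i k Hi Hk) as [w Hw]; now exists w|exists (fun _ => 0); lia..]. }
  exists (fun i k r => w (i, k) (Rmax 0 r)). intros i k Hi Hk.
  exact (C1_nonneg_extension _ _ (Hw (i, k) Hi Hk)).
Qed.

Lemma vnorm_le_dv N d v s i j : (i < N)%nat -> (j < N)%nat ->
  vnorm d (vsub (v i s) (v j s)) <= dv N d v s.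
Proof.
  intros Hi Hj. unfold dv.
  eapply Rle_trans; [|apply (maxn_R_ge N _ i Hi)].
  apply (maxn_R_ge N (fun j => vnorm d (vsub (v i s) (v j s))) j Hj).
Qed.

Lemma dv_ge0 N d v s : (0 < N)%nat -> 0 <= dv N d v s.
Proof. intros HN. eapply Rle_trans; [apply vnorm_ge0|apply (vnorm_le_dv N d v s 0 0 HN HN)]. Qed.

Lemma continuous_dv N d v s :
  (forall i k, (i < N)%nat -> (k < d)%nat -> continuous (fun u => v i u k) s) ->
  continuous (dv N d v) s.
Proof.
  intros Hv.
  apply (continuous_maxn_R N (fun i u => maxn_R N (fun j => vnorm d (vsub (v i u) (v j u))))).
  intros i Hi. apply (continuous_maxn_R N (fun j u => vnorm d (vsub (v i u) (v j u)))).
  intros j Hj. apply (continuous_vnorm d (fun u => vsub (v i u) (v j u))).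
  intros k Hk. apply (continuous_minus (fun u => v i u k) (fun u => v j u k)); auto.
Qed.

Section DelayedCuckerSmale.

Variables (N d : nat) (sigma tau : R) (psi : R -> R) (x v : nat -> R -> nat -> R).
Variable w : nat -> nat -> R -> R.

Hypothesis HN : (2 <= N)%nat.
Hypothesis Hsigma : 0 <= sigma.
Hypothesis Hsigtau : sigma <= tau.
Hypothesis Htau : 0 < tau.
Hypothesis Hpsi : forall r, 0 <= r -> 0 <= psi r <= 1.
Hypothesis Hw_cont : forall i k r, (i < N)%nat -> (k < d)%nat -> continuous (w i k) r.
Hypothesis Hv_cont : forall i k s, (i < N)%nat -> (k < d)%nat -> 0 <= s ->
  continuous (fun u => v i u k) s.
Hypothesis Hv_w : forall i k r, (i < N)%nat -> (k < d)%nat -> 0 < r ->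
  is_derive (fun s => v i s k) r (w i k r).
Hypothesis Hv_rhs : forall i k r, (i < N)%nat -> (k < d)%nat -> 0 < r ->
  is_derive (fun s => v i s k) r (rhs N d sigma tau psi x v i r k).

Definition max_accel (r : R) : R := maxn_R N (fun i => vnorm d (fun k => w i k r)).

Definition max_accel_int (y : R) : R := RInt max_accel 0 y.

Lemma vnorm_accel_le i r : (i < N)%nat -> vnorm d (fun k => w i k r) <= max_accel r.
Proof. apply (maxn_R_ge N (fun i => vnorm d (fun k => w i k r))). Qed.

Lemma max_accel_ge0 r : 0 <= max_accel r.
Proof. eapply Rle_trans; [apply vnorm_ge0|apply (vnorm_accel_le 0); lia]. Qed.

Lemma continuous_max_accel r : continuous max_accel r.
Proof.
  apply (continuous_maxn_R N (fun i r => vnorm d (fun k => w i k r))). intros i Hi.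
  apply (continuous_vnorm d (fun r k => w i k r)). intros k Hk. now apply Hw_cont.
Qed.

Lemma maxvdot_eq_max_accel r : 0 < r -> maxvdot N d v r = max_accel r.
Proof.
  intros Hr. apply maxn_R_ext. intros i Hi. apply vnorm_ext. intros k Hk.
  now apply is_derive_unique, Hv_w.
Qed.

Lemma ex_RInt_max_accel a b : ex_RInt max_accel a b.
Proof.
  apply (@ex_RInt_continuous R_CompleteNormedModule). intros; apply continuous_max_accel.
Qed.

Lemma RInt_max_accel a b : RInt max_accel a b = max_accel_int b - max_accel_int a.
Proof.
  unfold max_accel_int. rewrite <- (RInt_Chasles max_accel 0 a b) by apply ex_RInt_max_accel.
  unfold plus; simpl. lra.
Qed.

Lemma is_derive_max_accel_int y : is_derive max_accel_int y (max_accel y).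
Proof.
  apply (@is_derive_RInt R_CompleteNormedModule max_accel max_accel_int 0 y).
  - apply filter_forall. intros z. apply RInt_correct, ex_RInt_max_accel.
  - apply continuous_max_accel.
Qed.

Lemma continuous_max_accel_int y : continuous max_accel_int y.
Proof.
  apply (@ex_derive_continuous R_AbsRing R_NormedModule).
  eexists. apply is_derive_max_accel_int.
Qed.

Lemma max_accel_int_le a b : a <= b -> max_accel_int a <= max_accel_int b.
Proof.
  intros Hab. enough (0 <= RInt max_accel a b) by (rewrite RInt_max_accel in *; lra).
  apply RInt_ge_0; [exact Hab|apply ex_RInt_max_accel|intros; apply max_accel_ge0].
Qed.

Lemma velocity_increment_le i p q : (i < N)%nat -> 0 <= p <= q ->
  vnorm d (vsub (v i q) (v i p)) <= max_accel_int q - max_accel_int p.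
Proof.
  intros Hi Hpq. apply (vnorm_increment_le d (fun s => v i s) (fun r k => w i k r) _ max_accel).
  - lra.
  - intros r k Hr Hk. apply Hv_w; auto; lra.
  - intros r k Hr Hk. apply Hv_cont; auto; lra.
  - intros r _. apply is_derive_max_accel_int.
  - intros r _. apply continuous_max_accel_int.
  - intros r _. now apply vnorm_accel_le.
Qed.

Lemma delayed_gap_le i j r : (i < N)%nat -> (j < N)%nat -> tau <= r ->
  vnorm d (vsub (v j (r - tau)) (v i (r - sigma)))
  <= dv N d v (r - tau) + (max_accel_int (r - sigma) - max_accel_int (r - tau)).
Proof.
  intros Hi Hj Hr.
  eapply Rle_trans; [apply (vnorm_vsub_triangle d _ (v i (r - tau)))|].
  apply Rplus_le_compat; [now apply vnorm_le_dv|].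
  rewrite vnorm_vsub_sym. apply velocity_increment_le; [exact Hi|lra].
Qed.

Lemma max_accel_le_delayed r : tau <= r ->
  max_accel r <= dv N d v (r - tau) + (max_accel_int (r - sigma) - max_accel_int (r - tau)).
Proof.
  intros Hr. apply maxn_R_le; [lia|]. intros i Hi.
  rewrite (vnorm_ext d _ (rhs N d sigma tau psi x v i r)).
  - apply vnorm_rhs_le; auto. intros j Hj. now apply delayed_gap_le.
  - intros k Hk. rewrite <- (is_derive_unique _ _ _ (Hv_w i k r Hi Hk ltac:(lra))).
    apply is_derive_unique, Hv_rhs; auto; lra.
Qed.

Lemma max_accel_int_increment_le t : 2 * tau <= t ->
  max_accel_int (t - sigma) - max_accel_int (t - tau)
  <= RInt (fun s => dv N d v (s - tau)) (t - tau) (t - sigma)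
     + exp (2 * tau) * RInt (fun s => exp (- (t - sigma - s))
                                     * (max_accel_int (t - sigma) - max_accel_int s))
                           (Rmax 0 (t - sigma - 2 * tau)) (t - sigma).
Proof.
  intros Ht. rewrite <- RInt_max_accel.
  set (D := fun s => dv N d v (s - tau)).
  set (H := fun r => max_accel_int (r - sigma) - max_accel_int (r - tau)).
  assert (HD : ex_RInt D (t - tau) (t - sigma)).
  { apply (@ex_RInt_continuous R_CompleteNormedModule). intros s Hs.
    rewrite Rmin_left, Rmax_right in Hs by lra.
    apply continuous_comp_sub, continuous_dv. intros i k Hi Hk. apply Hv_cont; auto; lra. }
  assert (HH : ex_RInt H (t - tau) (t - sigma)).
  { apply (@ex_RInt_continuous R_CompleteNormedModule). intros s _.
    apply (continuous_minus (fun r => max_accel_int (r - sigma))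
                            (fun r => max_accel_int (r - tau)));
      apply continuous_comp_sub, continuous_max_accel_int. }
  eapply Rle_trans.
  { apply (RInt_le _ (fun r => D r + H r)); [lra|apply ex_RInt_max_accel| |].
    - now apply (ex_RInt_plus D H).
    - intros r Hr. apply max_accel_le_delayed. lra. }
  rewrite (RInt_plus D H) by assumption.
  apply Rplus_le_compat_l, delay_memory_le; [lra|exact Ht|apply continuous_max_accel_int|].
  apply max_accel_int_le.
Qed.

Lemma Gfun_eq beta b : 0 <= b ->
  Gfun N d tau beta v b
  = dv N d v b + beta * RInt (fun s => exp (- (b - s)) * (max_accel_int b - max_accel_int s))
                             (Rmax 0 (b - 2 * tau)) b.
Proof.
  intros Hb. unfold Gfun. apply Rplus_eq_compat_l, Rmult_eq_compat_l.
  assert (HL : Rmax 0 (b - 2 * tau) <= b) by (apply Rmax_lub; lra).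
  apply RInt_ext. intros s Hs. rewrite Rmin_left, (Rmax_right _ b) in Hs by lra.
  pose proof (Rmax_l 0 (b - 2 * tau)).
  f_equal. rewrite <- RInt_max_accel. apply RInt_ext. intros r Hr.
  rewrite Rmin_left, Rmax_right in Hr by lra.
  apply maxvdot_eq_max_accel. lra.
Qed.

Lemma delayed_velocity_gap_le beta i j t :
  0 < beta -> (i < N)%nat -> (j < N)%nat -> 2 * tau <= t ->
  vnorm d (vsub (v j (t - tau)) (v i (t - sigma)))
  <= dv N d v (t - tau)
     + RInt (fun s => dv N d v (s - tau)) (t - tau) (t - sigma)
     + / beta * exp (2 * tau) * Gfun N d tau beta v (t - sigma).
Proof.
  intros Hbeta Hi Hj Ht.
  rewrite Gfun_eq by lra.
  pose proof (delayed_gap_le i j t Hi Hj ltac:(lra)).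
  pose proof (max_accel_int_increment_le t Ht).
  assert (0 <= / beta * exp (2 * tau) * dv N d v (t - sigma)).
  { apply Rmult_le_pos; [apply Rmult_le_pos|apply dv_ge0; lia].
    - now apply Rlt_le, Rinv_0_lt_compat.
    - apply Rlt_le, exp_pos. }
  set (K := RInt _ (Rmax 0 (t - sigma - 2 * tau)) (t - sigma)) in *.
  replace (/ beta * exp (2 * tau) * (dv N d v (t - sigma) + beta * K))
    with (/ beta * exp (2 * tau) * dv N d v (t - sigma) + exp (2 * tau) * K) by (field; lra).
  lra.
Qed.

End DelayedCuckerSmale.

Lemma velocity_gap_le_undelayed N d beta v i j t :
  (0 < N)%nat -> 0 < beta -> 0 <= t -> (i < N)%nat -> (j < N)%nat ->
  vnorm d (vsub (v j (t - 0)) (v i (t - 0)))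
  <= dv N d v (t - 0) + RInt (fun s => dv N d v (s - 0)) (t - 0) (t - 0)
     + / beta * exp (2 * 0) * Gfun N d 0 beta v (t - 0).
Proof.
  intros HN Hbeta Ht Hi Hj. unfold Gfun.
  rewrite !Rmult_0_r, !Rminus_0_r, exp_0, Rmax_right, !RInt_point by exact Ht.
  unfold zero; simpl. rewrite Rmult_0_r, !Rplus_0_r, Rmult_1_r.
  pose proof (vnorm_le_dv N d v t j i Hj Hi). pose proof (dv_ge0 N d v t HN).
  assert (0 <= / beta) by now apply Rlt_le, Rinv_0_lt_compat.
  nra.
Qed.

Theorem lemma4p3
  (N d : nat) (sigma tau beta : R) (psi : R -> R)
  (x0 v0 x v : nat -> R -> nat -> R)
  (HN : (2 <= N)%nat) (Hd : (1 <= d)%nat)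
  (Hsigma : 0 <= sigma) (Hsigtau : sigma <= tau) (Hbeta : 0 < beta)
  (* psi : [0,oo) -> [0,oo) continuous, nonincreasing, positive, sup psi <= 1 *)
  (Hpsi_cont : forall r, 0 <= r ->
      filterlim psi (within (fun s => 0 <= s) (locally r)) (locally (psi r)))
  (Hpsi_mono : forall r s, 0 <= r -> r <= s -> psi s <= psi r)
  (Hpsi_pos : forall r, 0 <= r -> 0 < psi r)
  (Hpsi_le1 : forall r, 0 <= r -> psi r <= 1)
  (* initial data: x0 in C^1([-tau,0]), v0 in C([-tau,0]), d/dt x0 = v0 *)
  (Hv0_cont : forall i k t, (i < N)%nat -> (k < d)%nat -> -tau <= t <= 0 ->
      filterlim (fun s => v0 i s k) (within (fun s => -tau <= s <= 0) (locally t))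
                (locally (v0 i t k)))
  (Hx0_der : forall i k t, (i < N)%nat -> (k < d)%nat -> -tau <= t <= 0 ->
      filterdiff (fun s => x0 i s k) (within (fun s => -tau <= s <= 0) (locally t))
                 (fun h => scal h (v0 i t k)))
  (* the solution agrees with the initial data on [-tau,0] *)
  (Hx_init : forall i k t, (i < N)%nat -> (k < d)%nat -> -tau <= t <= 0 ->
      x i t k = x0 i t k)
  (Hv_init : forall i k t, (i < N)%nat -> (k < d)%nat -> -tau <= t <= 0 ->
      v i t k = v0 i t k)
  (* global solution: x, v continuous on [-tau,oo), dx/dt = v and the
     delayed Cucker-Smale velocity equation for t > 0 *)
  (Hx_cont : forall i k t, (i < N)%nat -> (k < d)%nat -> -tau <= t ->
      filterlim (fun s => x i s k) (within (fun s => -tau <= s) (locally t))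
                (locally (x i t k)))
  (Hv_cont : forall i k t, (i < N)%nat -> (k < d)%nat -> -tau <= t ->
      filterlim (fun s => v i s k) (within (fun s => -tau <= s) (locally t))
                (locally (v i t k)))
  (Hx_der : forall i k t, (i < N)%nat -> (k < d)%nat -> 0 < t ->
      is_derive (fun s => x i s k) t (v i t k))
  (Hv_der : forall i k t, (i < N)%nat -> (k < d)%nat -> 0 < t ->
      is_derive (fun s => v i s k) t (rhs N d sigma tau psi x v i t k))
  (* v_i continuously differentiable on [0,oo) (one-sided at 0) *)
  (Hv_C1 : forall i k, (i < N)%nat -> (k < d)%nat ->
      exists w : R -> R,
        forall t, 0 <= t ->
          filterdiff (fun s => v i s k) (within (fun s => 0 <= s) (locally t))
                     (fun h => scal h (w t))
          /\ filterlim w (within (fun s => 0 <= s) (locally t)) (locally (w t))) :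
  forall i j t, (i < N)%nat -> (j < N)%nat -> 2 * tau <= t ->
    vnorm d (vsub (v j (t - tau)) (v i (t - sigma)))
    <= dv N d v (t - tau)
       + RInt (fun s => dv N d v (s - tau)) (t - tau) (t - sigma)
       + / beta * exp (2 * tau) * Gfun N d tau beta v (t - sigma).
Proof.
  intros i j t Hi Hj Ht.
  destruct (Req_dec tau 0) as [Htau0|Htau0].
  { assert (sigma = 0) by lra. subst tau sigma.
    apply velocity_gap_le_undelayed; [lia|assumption|lra|assumption|assumption]. }
  destruct (C1_family_extension N d v Hv_C1) as [w Hw].
  apply (delayed_velocity_gap_le N d sigma tau psi x v w); auto; try lra.
  - intros r Hr. split; [now apply Rlt_le, Hpsi_pos|now apply Hpsi_le1].
  - intros i' k r Hi' Hk. now apply Hw.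
  - intros i' k s Hi' Hk Hs.
    apply (filterlim_filter_le_1 _ (locally_le_within s _ (locally_ge (- tau) s ltac:(lra)))).
    apply Hv_cont; auto; lra.
  - intros i' k r Hi' Hk. now apply Hw.
Qed.
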